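(* With the notation below, if $\Xi_{ijk}>0$, then the three lengths $l_{ij},l_{jk},l_{ki}$ satisfy the strict triangle inequalities, and the orthogonal circle of the resulting hyperbolic triangle is compact. In particular, for a triangulation $\mathcal T$, the set $\Xi(\mathcal T)$ of $(\mathbf I,\mathbf r)\in\mathbb R^{E(\mathcal T)}_{>1}\times\mathbb R^V_{>0}$ with $\Xi_{ijk}>0$ for every face $f_{ijk}$ is contained in $Q_h(\mathcal T)$.
   Context: For a face $f_{ijk}$ with radii $r_i,r_j,r_k>0$ at its vertices and inversive distances $a=I_{jk},b=I_{ki},c=I_{ij}>1$ on its edges, set $p=\cosh r_i,q=\cosh r_j,r=\cosh r_k$, $x=\cosh l_{jk}=qr+a\sinh r_j\sinh r_k$, $y=\cosh l_{ki}=rp+b\sinh r_k\sinh r_i$, $z=\cosh l_{ij}=pq+c\sinh r_i\sinh r_j$, and $$\Xi_{ijk}=p^2(1-x^2)+q^2(1-y^2)+r^2(1-z^2)+2pq(xy-z)+2pr(xz-y)+2qr(yz-x).$$ Orthogonal circle: embed the triangle isometrically in the Poincaré disk $\mathbb D\subset\mathbb R^2$; the hyperbolic vertex circles are Euclidean circles, and the orthogonal circle is the unique Euclidean circle orthogonal to all three; it is compact if it lies in the open disk $\mathbb D$. $Q_h(\mathcal T)$ is the set of $(\mathbf I,\mathbf r)$ whose lengths $l_{ij}=\operatorname{arccosh}(\cosh r_i\cosh r_j+I_{ij}\sinh r_i\sinh r_j)$ satisfy strict triangle inequalities on every face of the triangulation $\mathcal T$ (a $\Delta$-complex triangulation of a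 marked closed surface $(S,V)$). *)

From Stdlib Require Import Reals.
Open Scope R_scope.

Definition acosh (x : R) : R := ln (x + sqrt (x * x - 1)).

Definition edge_len (ri rj I : R) : R :=
  acosh (cosh ri * cosh rj + I * sinh ri * sinh rj).

(* Xi_{ijk}, with a = I_jk, b = I_ki, c = I_ij *)
Definition Xi (ri rj rk a b c : R) : R :=
  let p := cosh ri in let q := cosh rj in let r := cosh rk in
  let x := q * r + a * sinh rj * sinh rk in
  let y := r * p + b * sinh rk * sinh ri in
  let z := p * q + c * sinh ri * sinh rj in
  p^2 * (1 - x^2) + q^2 * (1 - y^2) + r^2 * (1 - z^2)
  + 2 * p * q * (x * y - z) + 2 * p * r * (x * z - y) + 2 * q * r * (y * z - x).

Definition strict_triangle (x y z : R) : Prop :=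
  x < y + z /\ y < z + x /\ z < x + y.

Definition pt := (R * R)%type.
Definition norm2 (z : pt) : R := fst z ^ 2 + snd z ^ 2.
Definition dist2 (z w : pt) : R := (fst z - fst w) ^ 2 + (snd z - snd w) ^ 2.
Definition in_disk (z : pt) : Prop := norm2 z < 1.

Definition dH (z w : pt) : R :=
  acosh (1 + 2 * dist2 z w / ((1 - norm2 z) * (1 - norm2 w))).

Definition euclid_circle_of (P : pt) (r : R) (e : pt) (s : R) : Prop :=
  0 < s /\ forall z : pt, (in_disk z /\ dH z P = r) <-> dist2 z e = s ^ 2.

Definition euclid_orthogonal (o : pt) (rho : R) (e : pt) (s : R) : Prop :=
  dist2 o e = rho ^ 2 + s ^ 2.

Definition orth_circle (Pi Pj Pk : pt) (ri rj rk : R) (o : pt) (rho : R) : Prop :=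
  0 < rho /\
  forall (e : pt) (s : R),
    (euclid_circle_of Pi ri e s \/ euclid_circle_of Pj rj e s
     \/ euclid_circle_of Pk rk e s) ->
    euclid_orthogonal o rho e s.

(* a Euclidean circle is compact if it lies in the open unit disk *)
Definition compact_circle (o : pt) (rho : R) : Prop :=
  sqrt (norm2 o) + rho < 1.

(* Combinatorial face data of a (Delta-complex) triangulation: each face f
   has vertices v1 f, v2 f, v3 f (= i, j, k) and edges e1 f, e2 f, e3 f
   (= e_jk, e_ki, e_ij), the edge e_n being opposite to vertex v_n. *)
Record triangulation := {
  TV : Type; TE : Type; TF : Type;
  v1 : TF -> TV; v2 : TF -> TV; v3 : TF -> TV;
  e1 : TF -> TE; e2 : TF -> TE; e3 : TF -> TE }.

Definition domain_ok (T : triangulation) (I : TE T -> R) (r : TV T -> R) : Prop :=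
  (forall e, 1 < I e) /\ (forall v, 0 < r v).

Definition Q_h (T : triangulation) (I : TE T -> R) (r : TV T -> R) : Prop :=
  domain_ok T I r /\
  forall f : TF T,
    strict_triangle
      (edge_len (r (v1 T f)) (r (v2 T f)) (I (e3 T f)))
      (edge_len (r (v2 T f)) (r (v3 T f)) (I (e1 T f)))
      (edge_len (r (v3 T f)) (r (v1 T f)) (I (e2 T f))).

Definition Xi_set (T : triangulation) (I : TE T -> R) (r : TV T -> R) : Prop :=
  domain_ok T I r /\
  forall f : TF T,
    0 < Xi (r (v1 T f)) (r (v2 T f)) (r (v3 T f)) (I (e1 T f)) (I (e2 T f)) (I (e3 T f)).

From Stdlib Require Import Reals Lra Psatz.
Open Scope R_scope.

(* Lift the Poincare disk to the hyperboloid [<X, X> = -1] of Minkowski space R^{1,2}.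
   The vertices of the face become unit timelike vectors whose Gram determinant is
   [gram3 x y z], with [x, y, z] the cosh of the edge lengths; its positivity forces
   the strict triangle inequalities, and it exceeds [Xi] by
   [(sinh r_i sinh r_j sinh r_k)^2 (a^2 + b^2 + c^2 + 2abc - 1) > 0].
   A Euclidean circle [(o, rho)] is encoded by a Lorentz vector [N], and it is
   orthogonal to the Euclidean image of the hyperbolic circle [(P, r)] iff
   [<N, P> = (|o|^2 - rho^2 - 1) cosh r]. The vector [M] dual to
   [(cosh r_i, cosh r_j, cosh r_k)] has [<M, M> = - Xi / gram3], which lies in [(-1, 0)].
   The orthogonal circle is the one with [N] a multiple of [M]; it exists because
   [<M, M> > -1], and it lies inside the disk because [M] is timelike and past-directed. *)

Lemma cosh_exp t : cosh t = (exp t + / exp t) / 2.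
Proof. unfold cosh; rewrite exp_Ropp; reflexivity. Qed.

Lemma sinh_exp t : sinh t = (exp t - / exp t) / 2.
Proof. unfold sinh; rewrite exp_Ropp; reflexivity. Qed.

Lemma cosh_sq t : cosh t ^ 2 = 1 + sinh t ^ 2.
Proof.
  rewrite cosh_exp, sinh_exp.
  assert (exp t <> 0) by apply Rgt_not_eq, exp_pos.
  field; assumption.
Qed.

Lemma cosh_add s t : cosh (s + t) = cosh s * cosh t + sinh s * sinh t.
Proof.
  rewrite !cosh_exp, !sinh_exp, exp_plus.
  assert (exp s <> 0) by apply Rgt_not_eq, exp_pos.
  assert (exp t <> 0) by apply Rgt_not_eq, exp_pos.
  field; split; assumption.
Qed.

Lemma sinh_pos t : 0 < t -> 0 < sinh t.
Proof. intro Ht; rewrite <- sinh_0; apply sinh_lt, Ht. Qed.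

Lemma sinh_ge0 t : 0 <= t -> 0 <= sinh t.
Proof.
  intros [Ht | <-]; [left; apply sinh_pos, Ht | rewrite sinh_0; lra].
Qed.

Lemma cosh_pos t : 0 < cosh t.
Proof.
  rewrite cosh_exp.
  pose proof (exp_pos t); pose proof (Rinv_0_lt_compat _ (exp_pos t)); lra.
Qed.

Lemma cosh_gt1 t : 0 < t -> 1 < cosh t.
Proof.
  intro Ht; pose proof (cosh_sq t); pose proof (sinh_pos t Ht); pose proof (cosh_pos t).
  nra.
Qed.

Section Acosh.

Variable u : R.
Hypothesis u_ge1 : 1 <= u.

Let w := sqrt (u * u - 1).

Lemma acosh_root_sq : w * w = u * u - 1.
Proof. apply sqrt_sqrt; nra. Qed.

Lemma acosh_arg_pos : 0 < u + w.
Proof. pose proof (sqrt_pos (u * u - 1)); unfold w; lra. Qed.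

Lemma exp_acosh : exp (acosh u) = u + w.
Proof. apply exp_ln, acosh_arg_pos. Qed.

Lemma exp_neg_acosh : / exp (acosh u) = u - w.
Proof.
  rewrite exp_acosh; pose proof acosh_root_sq; pose proof acosh_arg_pos.
  field_simplify_eq; lra.
Qed.

Lemma cosh_acosh : cosh (acosh u) = u.
Proof. rewrite cosh_exp, exp_neg_acosh, exp_acosh; lra. Qed.

Lemma sinh_acosh : sinh (acosh u) = w.
Proof. rewrite sinh_exp, exp_neg_acosh, exp_acosh; lra. Qed.

Lemma acosh_ge0 : 0 <= acosh u.
Proof.
  apply Rnot_lt_le; intro Hneg; apply sinh_lt in Hneg.
  rewrite sinh_0, sinh_acosh in Hneg; pose proof (sqrt_pos (u * u - 1)); unfold w in *; lra.
Qed.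

End Acosh.

Lemma acosh_cosh t : 0 <= t -> acosh (cosh t) = t.
Proof.
  intro Ht; unfold acosh.
  replace (cosh t * cosh t - 1) with (sinh t * sinh t) by (pose proof (cosh_sq t); nra).
  rewrite sqrt_square by (apply sinh_ge0, Ht).
  replace (cosh t + sinh t) with (exp t) by (rewrite cosh_exp, sinh_exp; field; apply Rgt_not_eq, exp_pos).
  apply ln_exp.
Qed.

Lemma acosh_lt u v : 1 <= u -> u < v -> acosh u < acosh v.
Proof.
  intros Hu Huv; apply ln_increasing; [apply acosh_arg_pos, Hu |].
  assert (sqrt (u * u - 1) <= sqrt (v * v - 1)) by (apply sqrt_le_1_alt; nra).
  lra.
Qed.

Lemma acosh_inj u v : 1 <= u -> 1 <= v -> acosh u = acosh v -> u = v.
Proof.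
  intros Hu Hv E; destruct (Rtotal_order u v) as [H | [H | H]]; trivial.
  - apply acosh_lt in H; lra.
  - apply acosh_lt in H; lra.
Qed.

Definition gram3 (x y z : R) : R := 1 + 2 * x * y * z - x ^ 2 - y ^ 2 - z ^ 2.

(* [cosh (acosh v + acosh w) = v w + sqrt ((v^2-1)(w^2-1))], and [u] stays below it
   exactly when the Gram determinant is positive. *)
Lemma acosh_lt_add u v w : 1 <= u -> 1 <= v -> 1 <= w ->
  0 < gram3 u v w -> acosh u < acosh v + acosh w.
Proof.
  intros Hu Hv Hw Hg; unfold gram3 in Hg.
  pose proof (acosh_ge0 v Hv); pose proof (acosh_ge0 w Hw).
  rewrite <- (acosh_cosh (acosh v + acosh w)) by lra.
  apply acosh_lt; [exact Hu |].
  rewrite cosh_add, !cosh_acosh, !sinh_acosh by assumption.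
  rewrite <- sqrt_mult by nra.
  assert (Hprod : 0 <= (v * v - 1) * (w * w - 1)) by (apply Rmult_le_pos; nra).
  pose proof (sqrt_pos ((v * v - 1) * (w * w - 1))).
  pose proof (sqrt_sqrt _ Hprod).
  nra.
Qed.

Lemma strict_triangle_acosh x y z : 1 <= x -> 1 <= y -> 1 <= z ->
  0 < gram3 x y z -> strict_triangle (acosh z) (acosh x) (acosh y).
Proof.
  intros Hx Hy Hz Hg; repeat split; apply acosh_lt_add; trivial;
    unfold gram3 in *; lra.
Qed.

Definition edge_cosh (ri rj I : R) : R := cosh ri * cosh rj + I * sinh ri * sinh rj.

Definition xi_form (p q r x y z : R) : R :=
  p ^ 2 * (1 - x ^ 2) + q ^ 2 * (1 - y ^ 2) + r ^ 2 * (1 - z ^ 2)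
  + 2 * p * q * (x * y - z) + 2 * p * r * (x * z - y) + 2 * q * r * (y * z - x).

Lemma edge_cosh_gt1 ri rj I : 0 < ri -> 0 < rj -> 1 < I -> 1 < edge_cosh ri rj I.
Proof.
  intros Hi Hj HI; unfold edge_cosh.
  pose proof (cosh_gt1 _ Hi); pose proof (cosh_gt1 _ Hj).
  pose proof (sinh_pos _ Hi); pose proof (sinh_pos _ Hj).
  assert (0 < I * sinh ri * sinh rj) by (apply Rmult_lt_0_compat; [apply Rmult_lt_0_compat |]; lra).
  nra.
Qed.

Lemma gram3_sub_Xi ri rj rk a b c :
  gram3 (edge_cosh rj rk a) (edge_cosh rk ri b) (edge_cosh ri rj c) - Xi ri rj rk a b c
  = (sinh ri * sinh rj * sinh rk) ^ 2 * (a ^ 2 + b ^ 2 + c ^ 2 + 2 * a * b * c - 1).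
Proof.
  unfold gram3, edge_cosh, Xi; rewrite !cosh_exp, !sinh_exp.
  assert (exp ri <> 0) by apply Rgt_not_eq, exp_pos.
  assert (exp rj <> 0) by apply Rgt_not_eq, exp_pos.
  assert (exp rk <> 0) by apply Rgt_not_eq, exp_pos.
  field; repeat split; assumption.
Qed.

Lemma Xi_lt_gram3 ri rj rk a b c :
  0 < ri -> 0 < rj -> 0 < rk -> 1 < a -> 1 < b -> 1 < c ->
  Xi ri rj rk a b c < gram3 (edge_cosh rj rk a) (edge_cosh rk ri b) (edge_cosh ri rj c).
Proof.
  intros Hi Hj Hk Ha Hb Hc; pose proof (gram3_sub_Xi ri rj rk a b c) as E.
  assert (Hs : 0 < sinh ri * sinh rj * sinh rk)
    by (pose proof (sinh_pos _ Hi); pose proof (sinh_pos _ Hj); pose proof (sinh_pos _ Hk);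
        apply Rmult_lt_0_compat; [apply Rmult_lt_0_compat |]; assumption).
  assert (0 < a ^ 2 + b ^ 2 + c ^ 2 + 2 * a * b * c - 1).
  { assert (0 < a * b * c) by (repeat apply Rmult_lt_0_compat; lra). nra. }
  assert (0 < (sinh ri * sinh rj * sinh rk) ^ 2 * (a ^ 2 + b ^ 2 + c ^ 2 + 2 * a * b * c - 1))
    by (apply Rmult_lt_0_compat; [apply pow_lt |]; assumption).
  lra.
Qed.

Lemma strict_triangle_of_Xi_pos ri rj rk a b c :
  0 < ri -> 0 < rj -> 0 < rk -> 1 < a -> 1 < b -> 1 < c -> 0 < Xi ri rj rk a b c ->
  strict_triangle (edge_len ri rj c) (edge_len rj rk a) (edge_len rk ri b).
Proof.
  intros Hi Hj Hk Ha Hb Hc HX.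
  pose proof (Xi_lt_gram3 ri rj rk a b c Hi Hj Hk Ha Hb Hc).
  apply (strict_triangle_acosh (edge_cosh rj rk a) (edge_cosh rk ri b) (edge_cosh ri rj c));
    try (left; apply edge_cosh_gt1; assumption); lra.
Qed.

Record mvec := MVec { mt : R; mx : R; my : R }.

Definition mdot (u v : mvec) : R := - mt u * mt v + mx u * mx v + my u * my v.

Definition mscale (h : R) (u : mvec) : mvec := MVec (h * mt u) (h * mx u) (h * my u).

Definition mcomb (al be ga : R) (a b c : mvec) : mvec :=
  MVec (al * mt a + be * mt b + ga * mt c) (al * mx a + be * mx b + ga * mx c)
       (al * my a + be * my b + ga * my c).

Lemma mdot_sym u v : mdot u v = mdot v u.
Proof. unfold mdot; ring. Qed.

Lemma mdot_scale_l h u v : mdot (mscale h u) v = h * mdot u v.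
Proof. unfold mdot, mscale; simpl; ring. Qed.

Lemma mdot_comb_l al be ga a b c v :
  mdot (mcomb al be ga a b c) v = al * mdot a v + be * mdot b v + ga * mdot c v.
Proof. unfold mdot, mcomb; simpl; ring. Qed.

(* Reversed Cauchy-Schwarz inequality. *)
Lemma mdot_future_timelike_neg u v : mdot u u < 0 -> mdot v v < 0 ->
  0 <= mt u -> 0 <= mt v -> mdot u v < 0.
Proof.
  destruct u as [u0 u1 u2], v as [w0 w1 w2]; unfold mdot; simpl; intros Hu Hv H0 H1.
  assert (0 <= (u1 * w2 - u2 * w1) ^ 2) by apply pow2_ge_0.
  assert (Hcs : (u1 * w1 + u2 * w2) ^ 2 <= (u1 ^ 2 + u2 ^ 2) * (w1 ^ 2 + w2 ^ 2)) by nra.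
  assert (0 < u0) by nra. assert (0 < w0) by nra.
  assert ((u1 ^ 2 + u2 ^ 2) * (w1 ^ 2 + w2 ^ 2) < (u0 * w0) ^ 2) by nra.
  assert (0 < u0 * w0) by nra.
  destruct (Rlt_or_le (u1 * w1 + u2 * w2) (u0 * w0)); nra.
Qed.

Definition det3 m11 m12 m13 m21 m22 m23 m31 m32 m33 : R :=
  m11 * (m22 * m33 - m23 * m32) - m12 * (m21 * m33 - m23 * m31)
  + m13 * (m21 * m32 - m22 * m31).

Lemma det3_kernel m11 m12 m13 m21 m22 m23 m31 m32 m33 w1 w2 w3 :
  det3 m11 m12 m13 m21 m22 m23 m31 m32 m33 <> 0 ->
  m11 * w1 + m12 * w2 + m13 * w3 = 0 -> m21 * w1 + m22 * w2 + m23 * w3 = 0 ->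
  m31 * w1 + m32 * w2 + m33 * w3 = 0 -> w1 = 0 /\ w2 = 0 /\ w3 = 0.
Proof.
  intros D E1 E2 E3; set (d := det3 m11 m12 m13 m21 m22 m23 m31 m32 m33) in *.
  assert (d * w1 = (m22 * m33 - m23 * m32) * (m11 * w1 + m12 * w2 + m13 * w3)
    - (m12 * m33 - m13 * m32) * (m21 * w1 + m22 * w2 + m23 * w3)
    + (m12 * m23 - m13 * m22) * (m31 * w1 + m32 * w2 + m33 * w3)) by (unfold d, det3; ring).
  assert (d * w2 = - (m21 * m33 - m23 * m31) * (m11 * w1 + m12 * w2 + m13 * w3)
    + (m11 * m33 - m13 * m31) * (m21 * w1 + m22 * w2 + m23 * w3)
    - (m11 * m23 - m13 * m21) * (m31 * w1 + m32 * w2 + m33 * w3)) by (unfold d, det3; ring).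
  assert (d * w3 = (m21 * m32 - m22 * m31) * (m11 * w1 + m12 * w2 + m13 * w3)
    - (m11 * m32 - m12 * m31) * (m21 * w1 + m22 * w2 + m23 * w3)
    + (m11 * m22 - m12 * m21) * (m31 * w1 + m32 * w2 + m33 * w3)) by (unfold d, det3; ring).
  rewrite E1, E2, E3 in *.
  repeat split; apply (Rmult_eq_reg_l d); trivial; lra.
Qed.

Definition mdet (a b c : mvec) : R :=
  det3 (mt a) (mx a) (my a) (mt b) (mx b) (my b) (mt c) (mx c) (my c).

Section UnitTriple.

Variables (a b c : mvec) (x y z : R).
Hypotheses (Haa : mdot a a = -1) (Hbb : mdot b b = -1) (Hcc : mdot c c = -1)
  (Hab : mdot a b = -z) (Hbc : mdot b c = -x) (Hca : mdot c a = -y).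

(* The Gram matrix of [a, b, c] is [A J A^T] with [J = diag(-1, 1, 1)]. *)
Lemma mdet_sq : mdet a b c ^ 2 = gram3 x y z.
Proof.
  transitivity (- det3 (mdot a a) (mdot a b) (mdot c a) (mdot a b) (mdot b b) (mdot b c)
                       (mdot c a) (mdot b c) (mdot c c)).
  - unfold mdet, det3, mdot; ring.
  - rewrite Haa, Hbb, Hcc, Hab, Hbc, Hca; unfold det3, gram3; ring.
Qed.

Lemma mvec_eq_of_mdot U W : gram3 x y z <> 0 ->
  mdot U a = mdot W a -> mdot U b = mdot W b -> mdot U c = mdot W c -> U = W.
Proof.
  intros Hg Ea Eb Ec.
  destruct (det3_kernel (- mt a) (mx a) (my a) (- mt b) (mx b) (my b) (- mt c) (mx c) (my c)
    (mt U - mt W) (mx U - mx W) (my U - my W)) as (E0 & E1 & E2).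
  - assert (det3 (- mt a) (mx a) (my a) (- mt b) (mx b) (my b) (- mt c) (mx c) (my c)
            = - mdet a b c) by (unfold mdet, det3; ring).
    intro D; apply Hg; rewrite <- mdet_sq; nra.
  - unfold mdot in Ea; lra.
  - unfold mdot in Eb; lra.
  - unfold mdot in Ec; lra.
  - destruct U, W; simpl in *; f_equal; lra.
Qed.

(* [xi_form] is the quadratic form of the adjugate of the Gram matrix, so the vector
   dual to [(p, q, r)] has Lorentz square [- xi_form / gram3]. *)
Lemma dual_vector p q r : gram3 x y z <> 0 ->
  exists M, mdot M a = p /\ mdot M b = q /\ mdot M c = r /\
            mdot M M = - xi_form p q r x y z / gram3 x y z.
Proof.
  intro Hg; set (D := gram3 x y z) in *.
  set (al := - ((1 - x ^ 2) * p + (x * y - z) * q + (x * z - y) * r) / D).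
  set (be := - ((x * y - z) * p + (1 - y ^ 2) * q + (y * z - x) * r) / D).
  set (ga := - ((x * z - y) * p + (y * z - x) * q + (1 - z ^ 2) * r) / D).
  assert (Hba : mdot b a = -z) by (rewrite mdot_sym; exact Hab).
  assert (Hcb : mdot c b = -x) by (rewrite mdot_sym; exact Hbc).
  assert (Hac : mdot a c = -y) by (rewrite mdot_sym; exact Hca).
  exists (mcomb al be ga a b c).
  assert (Ea : mdot (mcomb al be ga a b c) a = p).
  { rewrite mdot_comb_l, Haa, Hba, Hca; unfold al, be, ga, D, gram3 in *; field; exact Hg. }
  assert (Eb : mdot (mcomb al be ga a b c) b = q).
  { rewrite mdot_comb_l, Hab, Hbb, Hcb; unfold al, be, ga, D, gram3 in *; field; exact Hg. }
  assert (Ec : mdot (mcomb al be ga a b c) c = r).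
  { rewrite mdot_comb_l, Hac, Hbc, Hcc; unfold al, be, ga, D, gram3 in *; field; exact Hg. }
  repeat split; trivial.
  rewrite mdot_comb_l, !(mdot_sym _ (mcomb al be ga a b c)), Ea, Eb, Ec.
  unfold al, be, ga, D, gram3, xi_form in *; field; exact Hg.
Qed.

End UnitTriple.

Lemma norm2_ge0 P : 0 <= norm2 P.
Proof. unfold norm2; pose proof (pow2_ge_0 (fst P)); pose proof (pow2_ge_0 (snd P)); lra. Qed.

Lemma dist2_ge0 P Q : 0 <= dist2 P Q.
Proof.
  unfold dist2; pose proof (pow2_ge_0 (fst P - fst Q)); pose proof (pow2_ge_0 (snd P - snd Q)); lra.
Qed.

Lemma dist2_eq0 P Q : dist2 P Q = 0 -> P = Q.
Proof.
  destruct P as [p1 p2], Q as [q1 q2]; unfold dist2; simpl; intro E.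
  pose proof (pow2_ge_0 (p1 - q1)); pose proof (pow2_ge_0 (p2 - q2)).
  assert (E1 : (p1 - q1) ^ 2 = 0) by lra; assert (E2 : (p2 - q2) ^ 2 = 0) by lra.
  rewrite <- Rsqr_pow2 in E1, E2; apply Rsqr_0_uniq in E1, E2; f_equal; lra.
Qed.

(* The lift of the Poincare disk to the hyperboloid model. *)
Definition hyp (P : pt) : mvec :=
  MVec ((1 + norm2 P) / (1 - norm2 P)) (2 * fst P / (1 - norm2 P)) (2 * snd P / (1 - norm2 P)).

Lemma mdot_hyp_self P : in_disk P -> mdot (hyp P) (hyp P) = -1.
Proof. unfold in_disk, mdot, hyp, norm2; simpl; intro H; field; lra. Qed.

Lemma mt_hyp_pos P : in_disk P -> 0 < mt (hyp P).
Proof. unfold in_disk; simpl; intro H; pose proof (norm2_ge0 P); apply Rdiv_lt_0_compat; lra. Qed.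

Lemma dH_arg_mdot P Q : in_disk P -> in_disk Q ->
  1 + 2 * dist2 P Q / ((1 - norm2 P) * (1 - norm2 Q)) = - mdot (hyp P) (hyp Q).
Proof. unfold in_disk, mdot, hyp, dist2, norm2; simpl; intros HP HQ; field; lra. Qed.

Lemma dH_arg_ge1 P Q : in_disk P -> in_disk Q ->
  1 <= 1 + 2 * dist2 P Q / ((1 - norm2 P) * (1 - norm2 Q)).
Proof.
  unfold in_disk; intros HP HQ; pose proof (dist2_ge0 P Q).
  assert (0 < (1 - norm2 P) * (1 - norm2 Q)) by (apply Rmult_lt_0_compat; lra).
  assert (0 <= 2 * dist2 P Q / ((1 - norm2 P) * (1 - norm2 Q)))
    by (apply Rmult_le_pos; [lra | left; apply Rinv_0_lt_compat; assumption]).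
  lra.
Qed.

Lemma mdot_hyp_of_dH P Q w : in_disk P -> in_disk Q -> 1 <= w ->
  dH P Q = acosh w -> mdot (hyp P) (hyp Q) = - w.
Proof.
  intros HP HQ Hw E; apply acosh_inj in E; [| apply dH_arg_ge1 | ]; trivial.
  rewrite dH_arg_mdot in E; trivial; lra.
Qed.

(* The hyperbolic circle of center [P] and radius [r] is [dist2 z P = k (1 - norm2 z)]. *)
Definition circ_k (P : pt) (r : R) : R := (cosh r - 1) * (1 - norm2 P) / 2.

Definition circ_center (P : pt) (r : R) : pt :=
  (fst P / (1 + circ_k P r), snd P / (1 + circ_k P r)).

Definition circ_radius (P : pt) (r : R) : R :=
  sqrt (circ_k P r * (1 - norm2 P + circ_k P r)) / (1 + circ_k P r).

Section VertexCircle.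

Variables (P : pt) (r : R).
Hypotheses (HP : in_disk P) (Hr : 0 < r).

Lemma circ_k_pos : 0 < circ_k P r.
Proof.
  unfold in_disk, circ_k in *; pose proof (cosh_gt1 r Hr).
  assert (0 < (cosh r - 1) * (1 - norm2 P)) by (apply Rmult_lt_0_compat; lra).
  lra.
Qed.

Lemma circ_radius_pos : 0 < circ_radius P r.
Proof.
  pose proof circ_k_pos; unfold in_disk, circ_radius in *.
  apply Rdiv_lt_0_compat; [apply sqrt_lt_R0, Rmult_lt_0_compat |]; lra.
Qed.

Lemma circ_radius_sq : circ_radius P r ^ 2
  = circ_k P r * (1 - norm2 P + circ_k P r) / (1 + circ_k P r) ^ 2.
Proof.
  pose proof circ_k_pos; unfold in_disk, circ_radius in *.
  unfold Rdiv; rewrite Rpow_mult_distr, pow_inv, <- Rsqr_pow2, Rsqr_sqrt; [ring |].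
  apply Rmult_le_pos; lra.
Qed.

Lemma dist2_circ_center z :
  dist2 z (circ_center P r) - circ_radius P r ^ 2
  = (dist2 z P - circ_k P r * (1 - norm2 z)) / (1 + circ_k P r).
Proof.
  pose proof circ_k_pos; rewrite circ_radius_sq.
  unfold dist2, circ_center, norm2; simpl; field; lra.
Qed.

Lemma euclid_circle_of_explicit : euclid_circle_of P r (circ_center P r) (circ_radius P r).
Proof.
  split; [exact circ_radius_pos |]; intro z.
  pose proof circ_k_pos as Hk; pose proof (dist2_circ_center z) as E.
  assert (Hiff : dist2 z (circ_center P r) = circ_radius P r ^ 2
                 <-> dist2 z P = circ_k P r * (1 - norm2 z)).
  { split; intro Ec.
    - rewrite Ec, Rminus_diag in E.
      apply (Rmult_eq_reg_r (/ (1 + circ_k P r))); [lra |].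
      apply Rinv_neq_0_compat; lra.
    - rewrite Ec, Rminus_diag in E; unfold Rdiv in E; lra. }
  rewrite Hiff; unfold in_disk in *; split.
  - intros [Hz Hd]; unfold dH in Hd.
    apply (f_equal cosh) in Hd; rewrite cosh_acosh in Hd by (apply dH_arg_ge1; assumption).
    unfold circ_k; rewrite <- Hd; field; lra.
  - intro Ez.
    assert (Hz : norm2 z < 1).
    { apply Rnot_le_lt; intro Hn.
      assert (Ed : dist2 z P = 0) by (pose proof (dist2_ge0 z P); nra).
      apply dist2_eq0 in Ed; subst; lra. }
    split; [exact Hz |]; unfold dH; rewrite Ez.
    replace (1 + 2 * (circ_k P r * (1 - norm2 z)) / ((1 - norm2 z) * (1 - norm2 P)))
      with (cosh r) by (unfold circ_k; field; lra).
    apply acosh_cosh; lra.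
Qed.

End VertexCircle.

Lemma euclid_circle_unique e s e' s' : 0 < s -> 0 < s' ->
  (forall z, dist2 z e = s ^ 2 <-> dist2 z e' = s' ^ 2) -> e = e' /\ s = s'.
Proof.
  intros Hs Hs' H; destruct e as [ex ey], e' as [fx fy].
  assert (H1 := proj2 (H (fx + s', fy)) ltac:(unfold dist2; simpl; ring)).
  assert (H2 := proj2 (H (fx - s', fy)) ltac:(unfold dist2; simpl; ring)).
  assert (H3 := proj2 (H (fx, fy + s')) ltac:(unfold dist2; simpl; ring)).
  assert (H4 := proj2 (H (fx, fy - s')) ltac:(unfold dist2; simpl; ring)).
  unfold dist2 in *; simpl in *.
  assert (ex = fx) by nra; assert (ey = fy) by nra; subst.
  split; [reflexivity | nra].
Qed.

(* A Euclidean circle [(o, rho)], with [t = |o|^2 - rho^2], is the zero set of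
   [|z|^2 - 2 <o, z> + t]; its coefficients form a Lorentz vector. *)
Definition circle_vec (o : pt) (rho : R) : mvec :=
  MVec (1 + (norm2 o - rho ^ 2)) (2 * fst o) (2 * snd o).

Section VertexOrthogonality.

Variables (P : pt) (r : R) (o : pt) (rho : R).
Hypotheses (HP : in_disk P) (Hr : 0 < r).

Lemma euclid_orthogonal_circ_iff :
  euclid_orthogonal o rho (circ_center P r) (circ_radius P r) <->
  mdot (circle_vec o rho) (hyp P) = (norm2 o - rho ^ 2 - 1) * cosh r.
Proof.
  pose proof (circ_k_pos P r HP Hr) as Hk; pose proof (circ_radius_sq P r HP Hr) as Hs.
  unfold in_disk in HP.
  set (k := - (1 - norm2 P) / (2 * (1 + circ_k P r))).
  assert (E : dist2 o (circ_center P r) - (rho ^ 2 + circ_radius P r ^ 2)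
    = k * (mdot (circle_vec o rho) (hyp P) - (norm2 o - rho ^ 2 - 1) * cosh r)).
  { assert (HN : 1 - norm2 P <> 0) by lra.
    assert (HK : 2 + (cosh r - 1) * (1 - norm2 P) <> 0) by (unfold circ_k in Hk; lra).
    rewrite Hs; unfold k, circ_center, circ_k, mdot, circle_vec, hyp, dist2, norm2 in *; simpl.
    field; split; intro Hc; [apply HN | apply HK]; rewrite <- Hc; ring. }
  assert (Hk0 : k <> 0).
  { apply Rlt_not_eq; unfold k, Rdiv.
    apply Rmult_neg_pos; [lra | apply Rinv_0_lt_compat; lra]. }
  unfold euclid_orthogonal; split; intro E2.
  - rewrite E2, Rminus_diag in E; symmetry in E.
    apply Rmult_integral in E; destruct E; [contradiction | lra].
  - rewrite E2, Rminus_diag, Rmult_0_r in E; lra.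
Qed.

Lemma orthogonal_vertex_circle_iff :
  (forall e s, euclid_circle_of P r e s -> euclid_orthogonal o rho e s) <->
  mdot (circle_vec o rho) (hyp P) = (norm2 o - rho ^ 2 - 1) * cosh r.
Proof.
  pose proof (euclid_circle_of_explicit P r HP Hr) as [Hs0 Hc0].
  rewrite <- euclid_orthogonal_circ_iff; split.
  - intro H; apply H, euclid_circle_of_explicit; assumption.
  - intros H e s [Hs Hc].
    destruct (euclid_circle_unique e s (circ_center P r) (circ_radius P r)) as [-> ->];
      trivial.
    intro z; rewrite <- Hc, Hc0; reflexivity.
Qed.

End VertexOrthogonality.

Lemma orth_circle_iff Pi Pj Pk ri rj rk o rho :
  in_disk Pi -> in_disk Pj -> in_disk Pk -> 0 < ri -> 0 < rj -> 0 < rk ->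
  orth_circle Pi Pj Pk ri rj rk o rho <->
  0 < rho /\
  mdot (circle_vec o rho) (hyp Pi) = (norm2 o - rho ^ 2 - 1) * cosh ri /\
  mdot (circle_vec o rho) (hyp Pj) = (norm2 o - rho ^ 2 - 1) * cosh rj /\
  mdot (circle_vec o rho) (hyp Pk) = (norm2 o - rho ^ 2 - 1) * cosh rk.
Proof.
  intros Hi Hj Hk Hri Hrj Hrk; unfold orth_circle.
  rewrite <- !orthogonal_vertex_circle_iff by assumption.
  split.
  - intros [Hrho H]; repeat split; auto.
  - intros (Hrho & Hi' & Hj' & Hk'); split; [exact Hrho |].
    intros e s [C | [C | C]]; auto.
Qed.

Lemma circle_vec_scaled_exists M : -1 < mdot M M -> mt M < 0 ->
  exists o rho, 0 < rho /\ circle_vec o rho = mscale (norm2 o - rho ^ 2 - 1) M.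
Proof.
  intros HM_gt HMt_neg.
  set (h := 2 / (mt M - 1)).
  assert (Hh : h * (mt M - 1) = 2) by (unfold h; field; lra).
  set (o := (h / 2 * mx M, h / 2 * my M)).
  assert (Eo : norm2 o - (h + 1) = h ^ 2 / 4 * (mdot M M + 1)).
  { unfold o, norm2, mdot, h; simpl; field; lra. }
  assert (Hpos : 0 < norm2 o - (h + 1)).
  { assert (h <> 0) by (intro H0; rewrite H0 in Hh; lra).
    rewrite Eo; apply Rmult_lt_0_compat; [| lra].
    apply Rdiv_lt_0_compat; [nra | lra]. }
  set (rho := sqrt (norm2 o - (h + 1))).
  assert (Hrho : rho ^ 2 = norm2 o - (h + 1))
    by (unfold rho; rewrite <- Rsqr_pow2; apply Rsqr_sqrt; lra).
  exists o, rho; split; [apply sqrt_lt_R0, Hpos |].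
  unfold circle_vec, mscale; rewrite Hrho; unfold o; cbn [fst snd]; f_equal; lra.
Qed.

Lemma compact_circle_of_timelike M o rho : mdot M M < 0 -> mt M < 0 -> 0 < rho ->
  circle_vec o rho = mscale (norm2 o - rho ^ 2 - 1) M -> compact_circle o rho.
Proof.
  intros HM_neg HMt_neg Hrho E; set (h := norm2 o - rho ^ 2 - 1) in E.
  injection E as E0 E1 E2.
  assert (Hh : h * (mt M - 1) = 2) by (unfold h in *; lra).
  assert (Hh_neg : h < 0) by (destruct (Rlt_or_le h 0); [assumption | nra]).
  assert (Hno : norm2 o = h ^ 2 / 4 * (mx M ^ 2 + my M ^ 2)).
  { unfold norm2; replace (fst o) with (h / 2 * mx M) by lra;
      replace (snd o) with (h / 2 * my M) by lra; field. }
  unfold compact_circle, mdot in *.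
  set (so := sqrt (norm2 o)).
  assert (Hso : so * so = norm2 o) by apply sqrt_sqrt, norm2_ge0.
  assert (Hso0 : 0 <= so) by apply sqrt_pos.
  (* [|o| < h mt M / 2 = h / 2 + 1], the center being [h / 2] times the spatial part of [M] *)
  assert (Hlt : so < h * mt M / 2).
  { assert (so ^ 2 < (h * mt M / 2) ^ 2).
    { replace (so ^ 2) with (so * so) by ring; rewrite Hso, Hno.
      replace ((h * mt M / 2) ^ 2) with (h ^ 2 / 4 * mt M ^ 2) by field.
      assert (0 < h ^ 2) by nra. nra. }
    assert (0 < h * mt M) by nra.
    destruct (Rlt_or_le so (h * mt M / 2)); [assumption | nra]. }
  assert (rho ^ 2 = norm2 o - h - 1) by (unfold h; ring).
  nra.
Qed.

Section Face.

Variables (ri rj rk a b c : R) (Pi Pj Pk : pt).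
Hypotheses (Hri : 0 < ri) (Hrj : 0 < rj) (Hrk : 0 < rk)
  (Ha : 1 < a) (Hb : 1 < b) (Hc : 1 < c) (HXi : 0 < Xi ri rj rk a b c)
  (HPi : in_disk Pi) (HPj : in_disk Pj) (HPk : in_disk Pk)
  (Dij : dH Pi Pj = edge_len ri rj c) (Djk : dH Pj Pk = edge_len rj rk a)
  (Dki : dH Pk Pi = edge_len rk ri b).

Let x := edge_cosh rj rk a.
Let y := edge_cosh rk ri b.
Let z := edge_cosh ri rj c.

Lemma face_gram3_pos : 0 < gram3 x y z.
Proof. pose proof (Xi_lt_gram3 ri rj rk a b c Hri Hrj Hrk Ha Hb Hc); unfold x, y, z; lra. Qed.

Lemma face_mdot_ij : mdot (hyp Pi) (hyp Pj) = - z.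
Proof. apply mdot_hyp_of_dH; trivial; left; apply edge_cosh_gt1; assumption. Qed.

Lemma face_mdot_jk : mdot (hyp Pj) (hyp Pk) = - x.
Proof. apply mdot_hyp_of_dH; trivial; left; apply edge_cosh_gt1; assumption. Qed.

Lemma face_mdot_ki : mdot (hyp Pk) (hyp Pi) = - y.
Proof. apply mdot_hyp_of_dH; trivial; left; apply edge_cosh_gt1; assumption. Qed.

Lemma face_dual_vector : exists M,
  mdot M (hyp Pi) = cosh ri /\ mdot M (hyp Pj) = cosh rj /\ mdot M (hyp Pk) = cosh rk /\
  -1 < mdot M M /\ mdot M M < 0 /\ mt M < 0.
Proof.
  pose proof face_gram3_pos as Hg.
  destruct (dual_vector (hyp Pi) (hyp Pj) (hyp Pk) x y z (mdot_hyp_self Pi HPi)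
    (mdot_hyp_self Pj HPj) (mdot_hyp_self Pk HPk) face_mdot_ij face_mdot_jk face_mdot_ki
    (cosh ri) (cosh rj) (cosh rk) ltac:(lra)) as (M & Ei & Ej & Ek & EM).
  change (xi_form (cosh ri) (cosh rj) (cosh rk) x y z) with (Xi ri rj rk a b c) in EM.
  pose proof (Xi_lt_gram3 ri rj rk a b c Hri Hrj Hrk Ha Hb Hc) as Hlt; fold x y z in Hlt.
  assert (HMM : -1 < mdot M M /\ mdot M M < 0).
  { assert (0 < Xi ri rj rk a b c / gram3 x y z) by (apply Rdiv_lt_0_compat; assumption).
    assert (Xi ri rj rk a b c / gram3 x y z < 1).
    { apply (Rmult_lt_reg_r (gram3 x y z)); [lra |].
      unfold Rdiv; rewrite Rmult_assoc, Rinv_l; lra. }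
    rewrite EM; split; lra. }
  exists M; repeat split; try tauto.
  (* [M] pairs positively with the future vector [hyp Pi], so it is past-directed. *)
  apply Rnot_le_lt; intro Ht.
  pose proof (mdot_future_timelike_neg M (hyp Pi) (proj2 HMM)
    ltac:(rewrite (mdot_hyp_self Pi HPi); lra) Ht (Rlt_le _ _ (mt_hyp_pos Pi HPi))).
  pose proof (cosh_pos ri); lra.
Qed.

Lemma face_orth_circle_exists : exists o rho, orth_circle Pi Pj Pk ri rj rk o rho.
Proof.
  destruct face_dual_vector as (M & Ei & Ej & Ek & HM1 & _ & HMt).
  destruct (circle_vec_scaled_exists M HM1 HMt) as (o & rho & Hrho & E).
  exists o, rho; apply orth_circle_iff; trivial.
  rewrite E, !mdot_scale_l, Ei, Ej, Ek; repeat split; trivial.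
Qed.

(* The three orthogonality conditions determine the circle vector up to the scale
   [|o|^2 - rho^2 - 1], since the Gram matrix of the vertices is nondegenerate. *)
Lemma face_orth_circle_compact o rho :
  orth_circle Pi Pj Pk ri rj rk o rho -> compact_circle o rho.
Proof.
  intro Horth; apply orth_circle_iff in Horth as (Hrho & Oi & Oj & Ok); trivial.
  destruct face_dual_vector as (M & Ei & Ej & Ek & _ & HM2 & HMt).
  apply (compact_circle_of_timelike M o rho HM2 HMt Hrho).
  pose proof face_gram3_pos.
  apply (mvec_eq_of_mdot (hyp Pi) (hyp Pj) (hyp Pk) x y z (mdot_hyp_self Pi HPi)
    (mdot_hyp_self Pj HPj) (mdot_hyp_self Pk HPk) face_mdot_ij face_mdot_jk face_mdot_ki);
    [lra | ..]; rewrite mdot_scale_l; congruence.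
Qed.

End Face.

Theorem mainTheorem3 :
  (forall ri rj rk a b c : R,
    0 < ri -> 0 < rj -> 0 < rk -> 1 < a -> 1 < b -> 1 < c ->
    0 < Xi ri rj rk a b c ->
    let lij := edge_len ri rj c in
    let ljk := edge_len rj rk a in
    let lki := edge_len rk ri b in
    strict_triangle lij ljk lki /\
    (forall Pi Pj Pk : pt,
       in_disk Pi -> in_disk Pj -> in_disk Pk ->
       dH Pi Pj = lij -> dH Pj Pk = ljk -> dH Pk Pi = lki ->
       (exists (o : pt) (rho : R), orth_circle Pi Pj Pk ri rj rk o rho) /\
       (forall (o : pt) (rho : R),
          orth_circle Pi Pj Pk ri rj rk o rho -> compact_circle o rho)))
  /\
  (forall (T : triangulation) (I : TE T -> R) (r : TV T -> R),
    Xi_set T I r -> Q_h T I r).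
Proof.
  split.
  - intros ri rj rk a b c Hri Hrj Hrk Ha Hb Hc HXi lij ljk lki.
    split; [apply strict_triangle_of_Xi_pos; assumption |].
    intros Pi Pj Pk HPi HPj HPk Dij Djk Dki; split.
    + apply (face_orth_circle_exists ri rj rk a b c); assumption.
    + apply (face_orth_circle_compact ri rj rk a b c); assumption.
  - intros T I r [[HI Hr] HXi]; split; [split; assumption |].
    intro f; apply strict_triangle_of_Xi_pos; auto.
Qed.
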